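(* Let $\alpha>0$, $\beta,\eta,\kappa\in\mathbb{R}$, $\rho>0$, $p\geq 1$, and $0\le a<x$. Let $f,g$ be two positive functions on $[0,\infty)$ with $f,g\in X^{p}_{c}(a,x)$ (for some $c\in\mathbb{R}$), such that ${}^{\rho}\mathcal{I}^{\alpha,\beta}_{a+,\eta,\kappa}f^{p}(x)<\infty$ and ${}^{\rho}\mathcal{I}^{\alpha,\beta}_{a+,\eta,\kappa}g^{p}(x)<\infty$. If there are real numbers $m,M>0$ with $0<m\leq \frac{f(t)}{g(t)}\leq M$ for all $t\in[a,x]$, then $$\left({}^{\rho}\mathcal{I}^{\alpha,\beta}_{a+,\eta,\kappa}f^{p}(x)\right)^{1/p}+\left({}^{\rho}\mathcal{I}^{\alpha,\beta}_{a+,\eta,\kappa}g^{p}(x)\right)^{1/p}\leq c_{1}\left({}^{\rho}\mathcal{I}^{\alpha,\beta}_{a+,\eta,\kappa}(f+g)^{p}(x)\right)^{1/p},$$ where $c_{1}=\frac{M(m+1)+(M+1)}{(m+1)(M+1)}$.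
   Context: For $c\in\mathbb{R}$ and $1\le p<\infty$, $X^{p}_{c}(a,b)$ denotes the space of Lebesgue measurable functions $f$ on $(a,b)$ with $\left(\int_a^b |t^{c}f(t)|^{p}\,\frac{dt}{t}\right)^{1/p}<\infty$. For $\alpha>0$, $\beta,\eta,\kappa\in\mathbb{R}$, $\rho>0$, $0\le a<x$, and a function $\varphi$, the generalized (Katugampola) fractional integral is $${}^{\rho}\mathcal{I}^{\alpha,\beta}_{a+,\eta,\kappa}\varphi(x)=\frac{\rho^{1-\beta}x^{\kappa}}{\Gamma(\alpha)}\int_{a}^{x}\frac{\tau^{\rho(\eta+1)-1}}{(x^{\rho}-\tau^{\rho})^{1-\alpha}}\varphi(\tau)\,d\tau,$$ whenever the integral exists. Notation such as ${}^{\rho}\mathcal{I}^{\alpha,\beta}_{a+,\eta,\kappa}f^{p}(x)$ or ${}^{\rho}\mathcal{I}^{\alpha,\beta}_{a+,\eta,\kappa}(f+g)^{p}(x)$ means the operator applied to the function $\tau\mapsto f(\tau)^p$, resp. $\tau\mapsto (f(\tau)+g(\tau))^p$, evaluated at $x$. *)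

From mathcomp Require Import all_boot all_order all_algebra.
From mathcomp Require Import all_classical all_reals all_analysis.
Set Implicit Arguments. Unset Strict Implicit. Unset Printing Implicit Defensive.
Import Order.TTheory GRing.Theory Num.Theory.
Local Open Scope classical_set_scope.
Local Open Scope ring_scope.

Definition Gamma {R : realType} (alpha : R) : R :=
  Rintegral (@lebesgue_measure R) `]0%R, +oo[
    (fun t => t `^ (alpha - 1) * expR (- t)).

Definition in_Xpc {R : realType} (c p a b : R) (f : R -> R) : Prop :=
  measurable_fun `]a, b[ f /\
  (\int[@lebesgue_measure R]_(t in `]a, b[)
      ((`| t `^ c * f t |) `^ p / t)%:E < +oo)%E.

Definition katI {R : realType} (alpha beta eta kappa rho a : R)
    (phi : R -> R) (x : R) : \bar R :=
  ((rho `^ (1 - beta) * x `^ kappa / Gamma alpha)%:E *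
   \int[@lebesgue_measure R]_(tau in `]a, x[)
      (tau `^ (rho * (eta + 1) - 1) / (x `^ rho - tau `^ rho) `^ (1 - alpha)
        * phi tau)%:E)%E.

From mathcomp Require Import all_boot all_order all_algebra.
From mathcomp Require Import all_classical all_reals all_analysis.
From mathcomp Require Import measurable_realfun.
From mathcomp Require Import ring lra.
Set Implicit Arguments. Unset Strict Implicit. Unset Printing Implicit Defensive.
Import Order.TTheory GRing.Theory Num.Theory.
Local Open Scope classical_set_scope.
Local Open Scope ring_scope.

(** The ratio bounds give the pointwise comparisons [f <= M/(M+1) (f+g)],
    [g <= 1/(m+1) (f+g)] and [f + g <= (1 + 1/m) f].  The fractional integral
    is a positive linear functional, so raising them to the power [p], integrating
    and taking [p]-th roots turns the first two into
    [I(f^p)^(1/p) <= M/(M+1) I((f+g)^p)^(1/p)] and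
    [I(g^p)^(1/p) <= 1/(m+1) I((f+g)^p)^(1/p)], whose sum is the claim since
    [c1 = M/(M+1) + 1/(m+1)]; the third one only ensures that
    [I((f+g)^p)] is finite. *)

Section ratio_bounds.
Variables (R : realFieldType) (u v : R).
Hypothesis v0 : 0 < v.

Lemma ratio_ub_le_sum (M : R) : 0 < M -> u / v <= M -> u <= M / (M + 1) * (u + v).
Proof. by move=> M0; rewrite ler_pdivrMr // mulrAC ler_pdivlMr; lra. Qed.

Lemma ratio_lb_le_sum (m : R) : 0 < m -> m <= u / v -> v <= (m + 1)^-1 * (u + v).
Proof. by move=> m0; rewrite ler_pdivlMr // => mvu; rewrite mulrC ler_pdivlMr; lra. Qed.

Lemma ratio_lb_sum_le (m : R) : 0 < m -> m <= u / v -> u + v <= (1 + m^-1) * u.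
Proof.
move=> m0; rewrite ler_pdivlMr // => mvu.
by rewrite mulrDl mul1r lerD2l mulrC ler_pdivlMr //; lra.
Qed.
End ratio_bounds.

Lemma powR_le_scale (R : realType) (p k u v : R) :
  0 <= p -> 0 <= k -> 0 <= u -> 0 <= v -> u <= k * v ->
  u `^ p <= k `^ p * v `^ p.
Proof.
move=> p0 k0 u0 v0 ukv; rewrite -powRM //.
by apply: ge0_ler_powR; rewrite // nnegrE mulr_ge0.
Qed.

Lemma powRV_le_scale (R : realType) (p k u v : R) :
  0 < p -> 0 <= k -> 0 <= u -> 0 <= v -> u <= k `^ p * v ->
  u `^ p^-1 <= k * v `^ p^-1.
Proof.
move=> p0 k0 u0 v0 ukv.
rewrite -[k in k * _](powRr1 k0) -(divff (lt0r_neq0 p0)) powRrM -powRM ?powR_ge0 //.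
apply: ge0_ler_powR => //; rewrite ?invr_ge0 ?ltW // nnegrE //.
by rewrite mulr_ge0 ?powR_ge0.
Qed.

Lemma fine_powRV_le_scale (R : realType) (p k : R) (U V : \bar R) :
  0 < p -> 0 <= k -> (0 <= U)%E -> (0 <= V)%E -> (V < +oo)%E ->
  (U <= (k `^ p)%:E * V)%E -> fine U `^ p^-1 <= k * fine V `^ p^-1.
Proof.
move=> p0 k0 U0 V0 Voo UkV.
have Vfin : V \is a fin_num by rewrite ge0_fin_numE.
have kVfin : ((k `^ p)%:E * V)%E \is a fin_num by rewrite fin_numM.
have Ufin : U \is a fin_num.
  by rewrite ge0_fin_numE // (le_lt_trans UkV) // -ge0_fin_numE // (le_trans U0).
apply: powRV_le_scale p0 k0 (fine_ge0 U0) (fine_ge0 V0) _.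
by rewrite -[k `^ p]/(fine (k `^ p)%:E) -fineM // fine_le.
Qed.

Lemma ge0_integral_le_scale d (T : measurableType d) (R : realType)
    (mu : {measure set T -> \bar R}) (D : set T) (h1 h2 : T -> R) (k : R) :
  measurable D -> measurable_fun D h1 -> measurable_fun D h2 -> 0 <= k ->
  (forall t, D t -> 0 <= h1 t) -> (forall t, D t -> 0 <= h2 t) ->
  (forall t, D t -> h1 t <= k * h2 t) ->
  (\int[mu]_(t in D) (h1 t)%:E <= k%:E * \int[mu]_(t in D) (h2 t)%:E)%E.
Proof.
move=> mD mh1 mh2 k0 h10 h20 h12.
rewrite -ge0_integralZl_EFin //; last exact/measurable_EFinP.
apply: ge0_le_integral => //.
- exact/measurable_EFinP.
- by apply/measurable_EFinP; apply: measurable_funM => //; exact: measurable_cst.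
Qed.

Section katugampola.
Variables (R : realType) (alpha beta eta kappa rho a x : R).

Local Notation I phi := (katI alpha beta eta kappa rho a phi x).
Local Notation D := `]a, x[%classic.

Definition kat_weight (tau : R) : R :=
  tau `^ (rho * (eta + 1) - 1) / (x `^ rho - tau `^ rho) `^ (1 - alpha).

Definition kat_const : R := rho `^ (1 - beta) * x `^ kappa / Gamma alpha.

Lemma katIE (phi : R -> R) :
  I phi = (kat_const%:E * \int[lebesgue_measure]_(t in D) (kat_weight t * phi t)%:E)%E.
Proof. by []. Qed.

Lemma kat_weight_ge0 (tau : R) : 0 <= kat_weight tau.
Proof. by rewrite mulr_ge0 ?invr_ge0 ?powR_ge0. Qed.

Lemma measurable_kat_weight : measurable_fun D kat_weight.
Proof.
have -> : kat_weight =
    fun tau => tau `^ (rho * (eta + 1) - 1) * (x `^ rho - tau `^ rho) `^ (- (1 - alpha)).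
  by apply/funext => t; rewrite /kat_weight powRN.
apply: (measurable_funS measurableT (@subsetT _ D)).
apply: measurable_funM; first exact: measurable_powR.
apply: (measurableT_comp (measurable_powR _)) => /=.
by apply: measurable_funB; [exact: measurable_cst | exact: measurable_powR].
Qed.

Lemma kat_const_ge0 : 0 <= kat_const.
Proof.
rewrite divr_ge0 ?mulr_ge0 ?powR_ge0 //.
by apply: Rintegral_ge0 => t _; rewrite mulr_ge0 ?powR_ge0 ?expR_ge0.
Qed.

Lemma katI_ge0 (phi : R -> R) : (forall t, D t -> 0 <= phi t) -> (0 <= I phi)%E.
Proof.
move=> phi0; rewrite katIE mule_ge0 ?lee_fin ?kat_const_ge0 //.
by apply: integral_ge0 => t Dt; rewrite lee_fin mulr_ge0 ?kat_weight_ge0 ?phi0.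
Qed.

Lemma katI_le_scale (phi psi : R -> R) (k : R) :
  measurable_fun D phi -> measurable_fun D psi -> 0 <= k ->
  (forall t, D t -> 0 <= phi t) -> (forall t, D t -> 0 <= psi t) ->
  (forall t, D t -> phi t <= k * psi t) ->
  (I phi <= k%:E * I psi)%E.
Proof.
move=> mphi mpsi k0 phi0 psi0 phipsi.
rewrite !katIE muleCA lee_wpmul2l ?lee_fin ?kat_const_ge0 //.
have mW := measurable_kat_weight.
apply: ge0_integral_le_scale => //; try exact: measurable_funM.
- by move=> t Dt; rewrite mulr_ge0 ?kat_weight_ge0 ?phi0.
- by move=> t Dt; rewrite mulr_ge0 ?kat_weight_ge0 ?psi0.
- by move=> t Dt; rewrite mulrCA ler_wpM2l ?kat_weight_ge0 ?phipsi.
Qed.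

Variables (p : R) (u v : R -> R) (k : R).
Hypotheses (p0 : 0 < p) (k0 : 0 <= k).
Hypotheses (mu : measurable_fun D u) (mv : measurable_fun D v).
Hypotheses (u0 : forall t, D t -> 0 <= u t) (v0 : forall t, D t -> 0 <= v t).
Hypothesis (ukv : forall t, D t -> u t <= k * v t).

Let mpow (w : R -> R) : measurable_fun D w -> measurable_fun D (fun t => w t `^ p).
Proof. exact: measurableT_comp (measurable_powR _). Qed.

Lemma katI_powR_le_scale :
  (I (fun t => (u t `^ p)%R) <= (k `^ p)%:E * I (fun t => (v t `^ p)%R))%E.
Proof.
apply: katI_le_scale; try exact: mpow.
- exact: powR_ge0.
- by move=> t _; exact: powR_ge0.
- by move=> t _; exact: powR_ge0.
- by move=> t Dt; exact: powR_le_scale (ltW p0) k0 (u0 Dt) (v0 Dt) (ukv Dt).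
Qed.

Lemma katI_powR_lt_pinfty :
  (I (fun t => (v t `^ p)%R) < +oo)%E -> (I (fun t => (u t `^ p)%R) < +oo)%E.
Proof.
move=> Ivoo; apply: le_lt_trans katI_powR_le_scale _.
by rewrite lte_mul_pinfty ?lee_fin ?powR_ge0.
Qed.

Lemma katI_powRV_le_scale :
  (I (fun t => (v t `^ p)%R) < +oo)%E ->
  fine (I (fun t => (u t `^ p)%R)) `^ p^-1 <= k * fine (I (fun t => (v t `^ p)%R)) `^ p^-1.
Proof.
move=> Ivoo; apply: fine_powRV_le_scale p0 k0 _ _ Ivoo katI_powR_le_scale.
- by apply: katI_ge0 => t _; exact: powR_ge0.
- by apply: katI_ge0 => t _; exact: powR_ge0.
Qed.

End katugampola.

Theorem theorem8 (R : realType) (alpha beta eta kappa rho p a x c m M : R)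
  (f g : R -> R) :
  (0 < alpha)%R -> (0 < rho)%R -> (1 <= p)%R -> (0 <= a)%R -> (a < x)%R ->
  (forall t, (0 <= t)%R -> (0 < f t)%R) -> (forall t, (0 <= t)%R -> (0 < g t)%R) ->
  in_Xpc c p a x f -> in_Xpc c p a x g ->
  (katI alpha beta eta kappa rho a (fun t => (f t `^ p)%R) x < +oo)%E ->
  (katI alpha beta eta kappa rho a (fun t => (g t `^ p)%R) x < +oo)%E ->
  (0 < m)%R -> (0 < M)%R ->
  (forall t, (a <= t <= x)%R -> (m <= f t / g t <= M)%R) ->
  ((fine (katI alpha beta eta kappa rho a (fun t => (f t `^ p)%R) x)) `^ p^-1
  + (fine (katI alpha beta eta kappa rho a (fun t => (g t `^ p)%R) x)) `^ p^-1
  <= (M * (m + 1) + (M + 1)) / ((m + 1) * (M + 1))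
     * (fine (katI alpha beta eta kappa rho a (fun t => ((f t + g t) `^ p)%R) x))
         `^ p^-1)%R.
Proof.
move=> _ _ p1 a0 _ f0 g0 [mf _] [mg _] If Ig m0 M0 ratio.
have p0 : 0 < p by lra.
pose D : set R := `]a, x[%classic.
have fg_gt0 t : D t -> 0 < f t /\ 0 < g t.
  by rewrite /D /= in_itv /= => /andP[ta _]; split; [apply: f0 | apply: g0]; lra.
have ratioD t : D t -> m <= f t / g t <= M.
  by rewrite /D /= in_itv /= => /andP[ta tx]; apply: ratio; rewrite !ltW.
have f_ge0 t : D t -> 0 <= f t by move=> /fg_gt0[/ltW].
have g_ge0 t : D t -> 0 <= g t by move=> /fg_gt0[_ /ltW].
have fg_ge0 t : D t -> 0 <= f t + g t by move=> Dt; rewrite addr_ge0 ?f_ge0 ?g_ge0.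
have mfg : measurable_fun D (fun t => f t + g t) by exact: measurable_funD.
have f_le t (Dt : D t) : f t <= M / (M + 1) * (f t + g t).
  by rewrite ratio_ub_le_sum ?(fg_gt0 t Dt).2 //; case/andP: (ratioD t Dt).
have g_le t (Dt : D t) : g t <= (m + 1)^-1 * (f t + g t).
  by rewrite ratio_lb_le_sum ?(fg_gt0 t Dt).2 //; case/andP: (ratioD t Dt).
have fg_le t (Dt : D t) : f t + g t <= (1 + m^-1) * f t.
  by rewrite ratio_lb_sum_le ?(fg_gt0 t Dt).2 //; case/andP: (ratioD t Dt).
have q0 : 0 <= 1 + m^-1 by rewrite addr_ge0 // invr_ge0 ltW.
have Ifg := katI_powR_lt_pinfty p0 q0 mfg mf fg_ge0 f_ge0 fg_le If.
rewrite (_ : _ / _ = M / (M + 1) + (m + 1)^-1); last by field; lra.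
rewrite mulrDl; apply: lerD.
- have cM0 : 0 <= M / (M + 1) by rewrite divr_ge0 //; lra.
  exact: katI_powRV_le_scale p0 cM0 mf mfg f_ge0 fg_ge0 f_le Ifg.
- have cm0 : 0 <= (m + 1)^-1 by rewrite invr_ge0; lra.
  exact: katI_powRV_le_scale p0 cm0 mg mfg g_ge0 fg_ge0 g_le Ifg.
Qed.
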